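(* For any $\lambda_0,\lambda_1>0$ there is a function $f:(0,\infty)\to[0,\infty)$ with $\lim_{\epsilon\downarrow0}f(\epsilon)=0$ such that $$\mathcal{M}_{n+2}^{\epsilon,\lambda_0,\lambda_1}(x)\le f(\epsilon)\,\mathcal{M}_n^{\epsilon,\lambda_0,\lambda_1}(x)\quad\text{for all } n\in\mathbb{N},\ x\in\Gamma^\circ.$$
   Context: Fix $\alpha>\beta>0$. For $i\in\{0,1\}$ let $\Phi_i^t(x)=(i+(x_1-i)e^{-\alpha t},i+(x_2-i)e^{-\beta t})$ and $\Psi_i^t=\Phi_i^{-t}$. Let $\Gamma=\{(x_1,x_2):0\le x_2\le1,\ x_2^{\alpha/\beta}\le x_1\le1-(1-x_2)^{\alpha/\beta}\}$, $\Gamma^\circ$ its interior. For $\mathbf t=(t_1,\dots,t_n)\in(0,\infty)^n$ let $\Psi_0^{\mathbf t}$ be obtained by first applying $\Psi_0^{t_n}$, then $\Psi_1^{t_{n-1}}$, then $\Psi_0^{t_{n-2}}$, and so on alternately; for $0\le j\le n-1$, $\Psi_0^{(t_{n-j},\dots,t_n)}$ is the analogous map built from the last $j+1$ times. Let $T_0^n(x)=\{\mathbf t\in(0,\infty)^n:\Psi_0^{\mathbf t}(x)\in\Gamma^\circ\}$, $D(x)=\alpha\beta(x_1-x_2)$, and $M_n^\epsilon(x)=\{\mathbf t\in T_0^n(x):|D(\Psi_0^{(t_{n-j},\dots,t_n)}x)|<\epsilon,\ 0\le j\le n-1\}$. For real $\lambda_0,\lambda_1$, let $\lambda_0^{(n)}\in\mathbb{R}^n$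 be the vector with alternating entries $\lambda_0,\lambda_1$ whose last entry is $\lambda_0$, and $\mathcal{M}_n^{\epsilon,\lambda_0,\lambda_1}(x)=\int_{M_n^\epsilon(x)}e^{-\langle\lambda_0^{(n)},\mathbf t\rangle}\,d\mathbf t$. *)

From HB Require Import structures.
From mathcomp Require Import all_boot all_order all_algebra.
From mathcomp Require Import all_classical all_reals all_analysis.
Set Implicit Arguments. Unset Strict Implicit. Unset Printing Implicit Defensive.
Import Order.TTheory GRing.Theory Num.Theory.
Import numFieldNormedType.Exports.
Local Open Scope classical_set_scope.
Local Open Scope ring_scope.

Section Defs.
Variable R : realType.
Variables alpha beta : R.

Definition Phi (i : bool) (t : R) (x : R * R) : R * R :=
  (i%:R + (x.1 - i%:R) * expR (- (alpha * t)),
   i%:R + (x.2 - i%:R) * expR (- (beta * t))).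

Definition Psi (i : bool) (t : R) (x : R * R) : R * R := Phi i (- t) x.

Definition Gamma : set (R * R) :=
  [set x | 0 <= x.2 <= 1 /\
           x.2 `^ (alpha / beta) <= x.1 <= 1 - (1 - x.2) `^ (alpha / beta)].

Definition Gamma_int : set (R * R) := interior Gamma.

Fixpoint psiR (i : bool) (rs : seq R) (x : R * R) : R * R :=
  match rs with
  | [::] => x
  | r :: rs' => psiR (~~ i) rs' (Psi i r x)
  end.

(* For ts = [:: t_1; ...; t_n], Psi0_seq ts = Psi_0^{ts}: first Psi_0^{t_n},
   then Psi_1^{t_{n-1}}, then Psi_0^{t_{n-2}}, ... *)
Definition Psi0_seq (ts : seq R) (x : R * R) : R * R := psiR false (rev ts) x.

Definition posvec (ts : seq R) : Prop := forall k, (k < size ts)%N -> 0 < ts`_k.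

Definition T0 (n : nat) (x : R * R) : set (seq R) :=
  [set ts | size ts = n /\ posvec ts /\ Gamma_int (Psi0_seq ts x)].

Definition D (x : R * R) : R := alpha * beta * (x.1 - x.2).

(* M_n^eps(x); the suffix (t_{n-j},...,t_n) is drop (n-1-j) ts *)
Definition Mset (n : nat) (eps : R) (x : R * R) : set (seq R) :=
  [set ts | T0 n x ts /\
     forall j, (j < n)%N -> `| D (Psi0_seq (drop (n - 1 - j) ts) x) | < eps].

(* lambda_0^{(n)}: alternating entries lam0, lam1, last entry lam0
   (0-indexed entry k is lam0 iff n-1-k is even) *)
Definition lamvec (lam0 lam1 : R) (n k : nat) : R :=
  if odd (n - 1 - k) then lam1 else lam0.

Definition inner_lam (lam0 lam1 : R) (n : nat) (ts : seq R) : R :=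
  \sum_(k < n) lamvec lam0 lam1 n k * ts`_k.

(* Iterated Lebesgue integral over (0,oo)^n (first variable outermost);
   by Tonelli this is the Lebesgue integral over (0,oo)^n for the
   nonnegative measurable integrands used below. *)
Fixpoint iint (n : nat) (F : seq R -> \bar R) : \bar R :=
  match n with
  | 0 => F [::]
  | n'.+1 => (\int[lebesgue_measure]_(s in (`]0%R, +oo[%classic : set R))
                 iint n' (fun ts => F (s :: ts)))%E
  end.

Definition calM (n : nat) (eps lam0 lam1 : R) (x : R * R) : \bar R :=
  iint n (fun ts =>
    ((\1_(Mset n eps x) ts : R) * expR (- inner_lam lam0 lam1 n ts))%:E).

End Defs.

From HB Require Import structures.
From mathcomp Require Import all_boot all_order all_algebra.
From mathcomp Require Import all_classical all_reals all_analysis.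
From mathcomp Require Import measurable_realfun.
From mathcomp.algebra_tactics Require Import ring lra.
From mathcomp Require Import zify.
Import Order.TTheory GRing.Theory Num.Theory.
Import numFieldNormedType.Exports.
Set Implicit Arguments. Unset Strict Implicit. Unset Printing Implicit Defensive.
Local Open Scope classical_set_scope.
Local Open Scope ring_scope.

(* If [r :: s :: ts] lies in M_{n+2}(x), then [ts] lies in M_n(x) and the points
   y = Psi^{ts} x, z = Psi_i^s y and w = Psi_{1-i}^r z all lie in the strip
   |x_1 - x_2| < d := eps / (alpha beta).  Inside the strip, Psi_i^t separates the
   coordinates at rate (alpha - beta) |x_1 - i|, so |y_1 - i| s and |z_1 - (1 - i)| r
   are O(d).  If y is far from the corner (i, i) this makes s = O(d); otherwise z is
   still close to (i, i), hence far from (1 - i, 1 - i), which makes r = O(d), unless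
   s >= ln(1/d)/alpha + O(1).  So the weight e^{-<lambda, t>} of [r :: s :: ts] is at
   most B(r, s) times the weight of [ts], for a kernel B of total mass
   O(d + d^{lambda / (2 alpha)}), lambda = min(lambda_0, lambda_1). *)

(* This matters
   because the indicator of [Mset] is not known to be measurable. *)
Section nonmeasurable_integral.
Local Open Scope ereal_scope.
Context {d} {T : measurableType d} {R : realType} (mu : {measure set T -> \bar R}).
Import HBNNSimple.

Lemma nonmeasurable_ge0_le_integral {D : set T} {f g : T -> \bar R} :
  (forall x, D x -> 0 <= f x) -> (forall x, D x -> f x <= g x) ->
  \int[mu]_(x in D) f x <= \int[mu]_(x in D) g x.
Proof.
move=> f0 fg; have g0 x : D x -> 0 <= g x by move=> Dx; exact: le_trans (f0 x Dx) (fg x Dx).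
rewrite ge0_integralE // ge0_integralE //.
apply: ge_ereal_sup => _ [h hf <-]; apply: ereal_sup_ubound.
exists h => // x; apply: le_trans (hf x) _.
by rewrite /patch; case: ifPn => // /set_mem; exact: fg.
Qed.

Lemma nonmeasurable_ge0_integralZl_le {D : set T} {f : T -> \bar R} {c : R} :
  (0 <= c)%R -> (forall x, D x -> 0 <= f x) ->
  \int[mu]_(x in D) (c%:E * f x) <= c%:E * \int[mu]_(x in D) f x.
Proof.
move=> c0 f0; have [->|cn0] := eqVneq c 0%R.
  by rewrite mul0e; under eq_integral do rewrite mul0e; rewrite integral0.
have cp : (0 < c)%R by rewrite lt0r cn0.
rewrite ge0_integralE; last by move=> x Dx; rewrite mule_ge0 ?lee_fin ?f0.
rewrite ge0_integralE //; apply: ge_ereal_sup => _ [h hcf <-].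
have ci0 : (0 <= c^-1)%R by rewrite invr_ge0 ltW.
pose h' := scale_nnsfun h ci0.
have -> : sintegral mu h = c%:E * sintegral mu h'.
  by rewrite sintegralrM muleA -EFinM mulfV // mul1e.
rewrite lee_pmul2l ?lte_fin //; apply: ereal_sup_ubound; exists h' => // x.
have := hcf x; rewrite /h' /= /patch; case: ifPn => _ hx.
  by rewrite -(@lee_pmul2l _ c%:E) ?lte_fin // EFinM muleA -EFinM mulfV // mul1r.
by rewrite EFinM; apply: mule_ge0_le0 => //; rewrite lee_fin.
Qed.

End nonmeasurable_integral.

Section iterated_integral.
Variable R : realType.
Local Open Scope ereal_scope.
Notation I := (`]0%R, +oo[%classic : set R).
Notation mu := (@lebesgue_measure R).

Lemma iint_ge0 n (F : seq R -> \bar R) : (forall ts, 0 <= F ts) -> 0 <= iint n F.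
Proof.
elim: n F => [|n IH] F F0 //=.
by apply: integral_ge0 => s _; apply: IH.
Qed.

Lemma le_iint n (F G : seq R -> \bar R) : (forall ts, 0 <= F ts) ->
  (forall ts, F ts <= G ts) -> iint n F <= iint n G.
Proof.
elim: n F G => [|n IH] F G F0 FG //=.
apply: nonmeasurable_ge0_le_integral => s _; first exact: iint_ge0.
exact: IH.
Qed.

Lemma iintZl_le n (c : R) (F : seq R -> \bar R) : (0 <= c)%R ->
  (forall ts, 0 <= F ts) -> iint n (fun ts => c%:E * F ts) <= c%:E * iint n F.
Proof.
elim: n F => [|n IH] F c0 F0 //=.
apply: le_trans (nonmeasurable_ge0_integralZl_le _ c0 _); last first.
  by move=> s _; exact: iint_ge0.
apply: nonmeasurable_ge0_le_integral => s _.
  by apply: iint_ge0 => ts; rewrite mule_ge0 ?lee_fin.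
exact: IH.
Qed.

Lemma iint_cons2_le n (B : R -> R -> R) (b : R) (F G : seq R -> \bar R) :
  (0 < b)%R -> (forall r s, 0 <= B r s)%R ->
  (forall ts, 0 <= F ts) -> (forall ts, 0 <= G ts) ->
  (forall r s ts, F [:: r, s & ts] <= (B r s)%:E * G ts) ->
  \int[mu]_(r in I) \int[mu]_(s in I) (B r s)%:E <= b%:E ->
  iint n.+2 F <= b%:E * iint n G.
Proof.
move=> b0 B0 F0 G0 FBG Bb; have BG0 := iint_ge0 n G0.
have Bint0 r : I r -> 0 <= \int[mu]_(s in I) (B r s)%:E.
  by move=> _; apply: integral_ge0 => s _; rewrite lee_fin.
apply: (@le_trans _ _ (\int[mu]_(r in I) \int[mu]_(s in I) ((B r s)%:E * iint n G))).
  apply: nonmeasurable_ge0_le_integral => r _.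
    by apply: integral_ge0 => s _; exact: iint_ge0.
  apply: nonmeasurable_ge0_le_integral => s _; first exact: iint_ge0.
  by apply: (le_trans _ (iintZl_le n (B0 r s) G0)); exact: le_iint.
move: BG0; case: (iint n G) => [k||] // k0; last by rewrite gt0_muley ?lte_fin // leey.
rewrite lee_fin in k0.
under eq_integral do under eq_integral do rewrite muleC.
apply: (@le_trans _ _ (\int[mu]_(r in I) (k%:E * \int[mu]_(s in I) (B r s)%:E))).
  apply: nonmeasurable_ge0_le_integral => r _.
    by apply: integral_ge0 => s _; rewrite mule_ge0 ?lee_fin.
  by apply: nonmeasurable_ge0_integralZl_le => // s _; rewrite lee_fin.
apply: le_trans (nonmeasurable_ge0_integralZl_le mu k0 Bint0) _.
by rewrite muleC lee_wpmul2r ?lee_fin.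
Qed.

End iterated_integral.

Section pair_majorant.
Variable R : realType.

Definition pair_majorant (l q rho r s : R) : R :=
  (q * expR (- (l * r)) + \1_(`]0, rho[%classic : set R) r) * expR (- (l / 2 * s)) +
  expR (- (l * r)) * \1_(`]0, rho[%classic : set R) s.

Lemma pair_majorant_ge0 l q rho r s : 0 <= q -> 0 <= pair_majorant l q rho r s.
Proof. by move=> q0; rewrite /pair_majorant !(addr_ge0, mulr_ge0, expR_ge0). Qed.

Lemma expR_le_pair_majorant l q rho a b r s :
  0 < l -> 0 <= q -> l <= a -> l <= b -> 0 < r -> 0 < s ->
  expR (- (l / 2 * s)) <= q \/ r < rho \/ s < rho ->
  expR (- (a * r + b * s)) <= pair_majorant l q rho r s.
Proof.
move=> l0 q0 la lb r0 s0 cases.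
have decay : expR (- (a * r + b * s)) <= expR (- (l * r)) * expR (- (l * s)).
  have ar : l * r <= a * r by rewrite ler_pM2r.
  have bs : l * s <= b * s by rewrite ler_pM2r.
  by rewrite -expRD ler_expR -opprD lerN2 lerD.
apply: le_trans decay _; rewrite /pair_majorant.
have lr : 0 < l * r by rewrite mulr_gt0.
have ls : 0 < l * s by rewrite mulr_gt0.
rewrite mulrAC in cases *.
have er1 : expR (- (l * r)) <= 1 by rewrite expR_le1; lra.
have es2 : expR (- (l * s)) <= expR (- (l * s / 2)) by rewrite ler_expR; lra.
have er0 := expR_gt0 (- (l * r)).
have es20 := expR_gt0 (- (l * s / 2)).
have Ie2 : 0 <= \1_(`]0, rho[%classic : set R) r * expR (- (l * s / 2)).
  by rewrite mulr_ge0 ?expR_ge0.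
have erI : 0 <= expR (- (l * r)) * \1_(`]0, rho[%classic : set R) s.
  by rewrite mulr_ge0 ?expR_ge0.
have qe : 0 <= q * expR (- (l * r)) * expR (- (l * s / 2)).
  by rewrite !mulr_ge0 ?expR_ge0.
case: cases => [small|[rr|ss]].
- have : expR (- (l * s)) <= q * expR (- (l * s / 2)).
    by apply: le_trans (ler_wpM2r (ltW es20) small); rewrite -expRD ler_expR; lra.
  by move/(ler_wpM2l (ltW er0)); lra.
- have -> : \1_(`]0, rho[%classic : set R) r = 1.
    by rewrite /indic mem_set //= in_itv /= r0 rr.
  have : expR (- (l * r)) * expR (- (l * s)) <= expR (- (l * s / 2)).
    by rewrite -[leRHS]mul1r; exact: ler_pM (expR_ge0 _) (expR_ge0 _) er1 es2.
  lra.
- have -> : \1_(`]0, rho[%classic : set R) s = 1.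
    by rewrite /indic mem_set //= in_itv /= s0 ss.
  have : expR (- (l * r)) * expR (- (l * s)) <= expR (- (l * r)).
    by rewrite -[leRHS]mulr1 ler_wpM2l ?expR_ge0 // expR_le1; lra.
  lra.
Qed.
End pair_majorant.

Section exponential_integrals.
Variable R : realType.
Local Open Scope ereal_scope.
Notation I := (`]0%R, +oo[%classic : set R).
Notation mu := (@lebesgue_measure R).

Lemma integral_expR_le (c : R) : (0 < c)%R ->
  \int[mu]_(s in I) (expR (- (c * s)))%:E <= (c^-1)%:E.
Proof.
move=> c0; have pdf0 s : (0 <= exponential_pdf c s)%R by rewrite exponential_pdf_ge0 ?ltW.
have -> : \int[mu]_(s in I) (expR (- (c * s)))%:E =
    \int[mu]_(s in I) ((c^-1)%:E * (exponential_pdf c s)%:E).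
  apply: eq_integral => s; rewrite inE /= in_itv /= andbT => s0.
  by rewrite exponential_pdfE ?ltW // -EFinM mulrA mulVf ?gt_eqF // mul1r mulNr.
rewrite ge0_integralZl_EFin //; last 2 first.
- by apply/measurable_EFinP/measurable_funTS; exact: measurable_exponential_pdf.
- by rewrite invr_ge0 ltW.
rewrite -[leRHS]mule1 lee_pmul2l ?lte_fin ?invr_gt0 // -(integral_exponential_pdf c0).
apply: ge0_subset_integral => //.
- by apply: measurableT_comp => //; exact: measurable_exponential_pdf.
- by move=> s _; rewrite lee_fin.
- by move=> s _; rewrite lee_fin.
Qed.

Lemma integral_indic_itv_le (rho : R) : (0 < rho)%R ->
  \int[mu]_(s in I) (\1_(`]0%R, rho[%classic : set R) s)%:E <= rho%:E.
Proof.
move=> rho0; rewrite integral_indic //; apply: le_trans (measureIl _ _ _) _ => //.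
by have := lebesgue_measure_itv `]0%R, rho[; rewrite /= lte_fin rho0 sube0 => ->.
Qed.

Lemma integral_expR_indic_le {X Z h rho : R} :
  (0 <= X)%R -> (0 <= Z)%R -> (0 < h)%R -> (0 < rho)%R ->
  \int[mu]_(s in I) (X * expR (- (h * s)) + Z * \1_(`]0%R, rho[%classic : set R) s)%:E
    <= (X / h + Z * rho)%:E.
Proof.
move=> X0 Z0 h0 rho0.
have mexp : measurable_fun I (fun s : R => expR (- (h * s))).
  apply/measurable_funTS/measurableT_comp => //.
  by apply: measurableT_comp => //; exact: measurable_funM.
under eq_integral do rewrite EFinD.
rewrite ge0_integralD //; last 4 first.
- by move=> s _; rewrite lee_fin mulr_ge0 // expR_ge0.
- exact/measurable_EFinP/measurable_funM.
- by move=> s _; rewrite lee_fin mulr_ge0.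
- by apply/measurable_EFinP/measurable_funM => //; exact: measurable_indic.
under eq_integral do rewrite EFinM.
under [X in _ + X <= _]eq_integral do rewrite EFinM.
rewrite !ge0_integralZl_EFin //; last 2 first.
- by apply/measurable_EFinP; exact: measurable_indic.
- exact/measurable_EFinP.
rewrite EFinD 2!EFinM leeD // lee_wpmul2l ?lee_fin //.
  exact: integral_expR_le.
exact: integral_indic_itv_le.
Qed.

Lemma integral_pair_majorant_le l q rho : (0 < l)%R -> (0 <= q)%R -> (0 < rho)%R ->
  \int[mu]_(r in I) \int[mu]_(s in I) (pair_majorant l q rho r s)%:E <=
    ((2 * q / l + rho) / l + 2 / l * rho)%:E.
Proof.
move=> l0 q0 rho0; have l20 : (0 < l / 2)%R by rewrite divr_gt0.
apply: le_trans _ (integral_expR_indic_le _ _ _ _) => //; last 2 first.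
- by rewrite addr_ge0 ?divr_ge0 ?mulr_ge0 // ?ltW.
- by rewrite divr_ge0 // ltW.
apply: nonmeasurable_ge0_le_integral => r _.
  by apply: integral_ge0 => s _; rewrite lee_fin pair_majorant_ge0.
rewrite /pair_majorant; apply: le_trans (integral_expR_indic_le _ _ _ _) _ => //.
  by rewrite addr_ge0 // mulr_ge0 // expR_ge0.
by rewrite lee_fin le_eqVlt; apply/orP; left; apply/eqP; field; rewrite gt_eqF.
Qed.

End exponential_integrals.

Lemma onem_mul_expR_le1 (R : realType) (x : R) : (1 - x) * expR x <= 1.
Proof.
have := ler_wpM2r (expR_ge0 x) (expR_ge1Dx (- x)).
by rewrite -expRD addNr expR0.
Qed.

Section diagonal_strip.
Variable R : realType.
Variables alpha beta : R.
Hypothesis beta_gt0 : 0 < beta.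
Hypothesis beta_lt_alpha : beta < alpha.

Let alpha_gt0 : 0 < alpha. Proof. exact: lt_trans beta_lt_alpha. Qed.

Lemma PsiE i t y : Psi alpha beta i t y =
  (i%:R + (y.1 - i%:R) * expR (alpha * t), i%:R + (y.2 - i%:R) * expR (beta * t)).
Proof. by rewrite /Psi /Phi !mulrN !opprK. Qed.

Lemma PsiK i t : cancel (Psi alpha beta i t) (Phi alpha beta i t).
Proof.
case=> y1 y2; rewrite /Psi /Phi /= !mulrN !opprK ![_ + _ - _]addrC !addKr -!mulrA.
by rewrite !expRxMexpNx_1 !mulr1 !subrKC.
Qed.

Lemma Gamma_sym z : Gamma alpha beta z -> Gamma alpha beta (1 - z.1, 1 - z.2).
Proof.
rewrite /Gamma /= => -[/andP[z0 z1] /andP[lo up]].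
split; first by apply/andP; split; lra.
have -> : 1 - (1 - z.2) = z.2 by ring.
by apply/andP; split; lra.
Qed.

Lemma Phi_false_Gamma t z : 0 <= t -> Gamma alpha beta z ->
  Gamma alpha beta (Phi alpha beta false t z).
Proof.
move=> t0; rewrite /Gamma /Phi /= !subr0 !add0r => -[/andP[z0 z1] /andP[lo up]].
set ea := expR (- (alpha * t)); set eb := expR (- (beta * t)).
have eb0 : 0 < eb := expR_gt0 _.
have eb1 : eb <= 1 by rewrite expR_le1 oppr_le0 mulr_ge0 // ltW.
have eab : ea <= eb by rewrite ler_expR lerN2 ler_wpM2r // ltW.
have g1 : 1 <= alpha / beta by rewrite ler_pdivlMr // mul1r ltW.
have ebg : eb `^ (alpha / beta) = ea.
  by rewrite -expRM /ea; congr expR; field; rewrite gt_eqF.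
have z10 : 0 <= z.1 by apply: le_trans lo; exact: powR_ge0.
split; first by rewrite mulr_ge0 ?mulr_ile1 // ltW.
apply/andP; split.
  by rewrite powRM ?(ltW eb0) // ebg; apply: ler_wpM2r lo; exact: expR_ge0.
have cvx : (eb * (1 - z.2) + (1 - eb) * 1) `^ (alpha / beta) <=
    eb * (1 - z.2) `^ (alpha / beta) + (1 - eb) * 1 `^ (alpha / beta).
  apply: (convex_powR g1 (Itv01 (ltW eb0) eb1));
  by rewrite inE /= in_itv /= andbT ?subr_ge0.
have -> : 1 - z.2 * eb = eb * (1 - z.2) + (1 - eb) * 1 by ring.
have h1 : z.1 * ea <= z.1 * eb := ler_wpM2l z10 eab.
have h2 : z.1 * eb <= (1 - (1 - z.2) `^ (alpha / beta)) * eb := ler_wpM2r (ltW eb0) up.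
rewrite powR1 in cvx; clearbody ea eb; lra.
Qed.

Lemma Phi_Gamma i t z : 0 <= t -> Gamma alpha beta z -> Gamma alpha beta (Phi alpha beta i t z).
Proof.
move=> t0; case: i; last exact: Phi_false_Gamma.
move=> /Gamma_sym /(Phi_false_Gamma t0) /Gamma_sym.
by congr Gamma; rewrite /Phi /=; congr pair; ring.
Qed.

Lemma continuous_Psi i t : continuous (Psi alpha beta i t).
Proof.
move=> y; apply: (@cvg_pair _ _ _ (nbhs y) (nbhs _) (nbhs _));
  apply: cvgD (cvg_cst _) _; apply: cvgM (cvg_cst _);
  apply: cvgB (cvg_cst _); [exact: cvg_fst | exact: cvg_snd].
Qed.

Lemma Gamma_int_Psi {i t y} : 0 <= t ->
  Gamma_int alpha beta (Psi alpha beta i t y) -> Gamma_int alpha beta y.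
Proof.
move=> t0 GPsi; have : nbhs y (Psi alpha beta i t @^-1` Gamma alpha beta).
  exact: continuous_Psi.
apply: filterS => w /= Gw.
by rewrite -(PsiK i t w); exact: Phi_Gamma.
Qed.

Lemma expR_diff_ge {t} : 0 <= t ->
  expR (beta * t) * ((alpha - beta) * t) <= expR (alpha * t) - expR (beta * t).
Proof.
move=> t0; have -> : alpha * t = beta * t + (alpha - beta) * t by ring.
rewrite expRD -[X in _ <= _ - X]mulr1 -mulrBr ler_wpM2l ?expR_ge0 //.
by rewrite lerBrDl expR_ge1Dx.
Qed.

Lemma strip_exit_time {d i y t} : 0 <= t ->
  `|y.1 - y.2| < d -> `|(Psi alpha beta i t y).1 - (Psi alpha beta i t y).2| < d ->
  `|y.1 - i%:R| * ((alpha - beta) * t) < 2 * d.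
Proof.
move=> t0 gy; rewrite PsiE /= => gz.
have B1 : 1 <= expR (beta * t).
  by have := expR_ge1Dx (beta * t); have := mulr_ge0 (ltW beta_gt0) t0; lra.
have B0 : 0 < expR (beta * t) by exact: expR_gt0.
have AB := expR_diff_ge t0.
have AB0 : 0 <= expR (alpha * t) - expR (beta * t).
  by apply: le_trans AB; rewrite mulr_ge0 ?expR_ge0 // mulr_ge0 // subr_ge0 ltW.
have gapE : (y.1 - i%:R) * (expR (alpha * t) - expR (beta * t)) =
    (i%:R + (y.1 - i%:R) * expR (alpha * t) - (i%:R + (y.2 - i%:R) * expR (beta * t)))
    - (y.1 - y.2) * expR (beta * t) by ring.
have gB : `|y.1 - y.2| * expR (beta * t) < d * expR (beta * t) by rewrite ltr_pM2r.
have dB : d <= d * expR (beta * t) by rewrite ler_peMr // (le_trans _ (ltW gy)).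
have growth : `|y.1 - i%:R| * (expR (alpha * t) - expR (beta * t)) < 2 * d * expR (beta * t).
  rewrite -(ger0_norm AB0) -normrM gapE.
  apply: le_lt_trans (ler_normB _ _) _; rewrite normrM (gtr0_norm B0); lra.
have := ler_wpM2l (normr_ge0 (y.1 - i%:R)) AB.
rewrite -(ltr_pM2r B0); lra.
Qed.

Lemma Psi_dist_corner (i : bool) s y :
  1 - `|y.1 - i%:R| * expR (alpha * s) <= `|(Psi alpha beta i s y).1 - (~~ i)%:R|.
Proof.
have -> : (Psi alpha beta i s y).1 - (~~ i)%:R =
    (i%:R - (~~ i)%:R) + (y.1 - i%:R) * expR (alpha * s) by rewrite PsiE /=; ring.
apply: le_trans (lerB_normD _ _); rewrite normrM (gtr0_norm (expR_gt0 _)).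
by case: (i); rewrite /= ?subr0 ?sub0r ?normrN normr1.
Qed.

Lemma strip_trichotomy d i y r s : 0 < r -> 0 < s ->
  `|y.1 - y.2| < d ->
  `|(Psi alpha beta i s y).1 - (Psi alpha beta i s y).2| < d ->
  `|(Psi alpha beta (~~ i) r (Psi alpha beta i s y)).1 -
    (Psi alpha beta (~~ i) r (Psi alpha beta i s y)).2| < d ->
  expR (- (alpha * s)) <= alpha * (8 * d / (alpha - beta)) \/
  r < 8 * d / (alpha - beta) \/ s < 8 * d / (alpha - beta).
Proof.
move=> r0 s0 gy gz gw; have c0 : 0 < alpha - beta by rewrite subr_gt0.
have hs := strip_exit_time (ltW s0) gy gz.
have hr := strip_exit_time (ltW r0) gz gw.
have corner_dist := Psi_dist_corner i s y.
have growth := onem_mul_expR_le1 (alpha * s).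
have [far|near] := leP (expR (- (alpha * s))) (alpha * (8 * d / (alpha - beta))).
  by left.
have {}near : 8 * alpha * d * expR (alpha * s) < alpha - beta.
  move: near; rewrite -(ltr_pM2r (expR_gt0 (alpha * s))) -expRD addNr expR0 => near.
  have -> : 8 * alpha * d * expR (alpha * s) =
      alpha * (8 * d / (alpha - beta)) * expR (alpha * s) * (alpha - beta).
    by field; rewrite gt_eqF.
  by rewrite gtr_pMl.
right; move: (normr_ge0 (y.1 - i%:R)) (expR_gt0 (alpha * s)) hs hr corner_dist growth near.
move: (`|y.1 - i%:R|) (`|(Psi alpha beta i s y).1 - (~~ i)%:R|) (expR (alpha * s)).
move=> P U A P0 A0 hs hr corner_dist growth near.
have cs : 0 < (alpha - beta) * s by rewrite mulr_gt0.
have cr : 0 < (alpha - beta) * r by rewrite mulr_gt0.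
have [Pbig|Psmall] := leP (1 / 2) P.
  right; rewrite ltr_pdivlMr //.
  by have := ler_wpM2r (ltW cs) Pbig; lra.
left; rewrite ltr_pdivlMr //.
(* [P A <= P + alpha s P A] with [alpha s P A < 1/4] keeps [P A] below [3/4]. *)
have PA_growth : P * ((1 - alpha * s) * A) <= P by rewrite ler_piMr.
have slow : alpha * s * (P * A) < 1 / 4.
  have hsA := hs; rewrite -(ltr_pM2l (mulr_gt0 alpha_gt0 A0)) in hsA.
  by rewrite -(ltr_pM2r c0); lra.
have U_big : 1 / 4 < U by lra.
by move: U_big; rewrite -(ltr_pM2r cr); lra.
Qed.

Lemma psiR_rcons i (ts : seq R) u y :
  psiR alpha beta i (rcons ts u) y =
  Psi alpha beta (i (+) odd (size ts)) u (psiR alpha beta i ts y).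
Proof.
elim: ts i y => [|a ts IH] i y /=; first by rewrite addbF.
by rewrite IH addbN addNb.
Qed.

Lemma Psi0_seq_cons u ts x : Psi0_seq alpha beta (u :: ts) x =
  Psi alpha beta (odd (size ts)) u (Psi0_seq alpha beta ts x).
Proof. by rewrite /Psi0_seq rev_cons psiR_rcons size_rev. Qed.

Lemma inner_lam_cons2 lam0 lam1 n r s (ts : seq R) :
  inner_lam lam0 lam1 n.+2 [:: r, s & ts] =
  lamvec lam0 lam1 n.+2 0 * r + lamvec lam0 lam1 n.+2 1 * s + inner_lam lam0 lam1 n ts.
Proof.
rewrite /inner_lam 2!big_ord_recl addrA; congr (_ + _).
apply: eq_bigr => k _; rewrite /lamvec.
by rewrite (_ : n.+2 - 1 - bump 0 (bump 0 k) = n - 1 - k)%N // /bump /=; lia.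
Qed.

Lemma Mset_gap m eps x ts k : Mset alpha beta m eps x ts -> (k < m)%N ->
  `|D alpha beta (Psi0_seq alpha beta (drop k ts) x)| < eps.
Proof.
move=> [_ gap] km; have := gap (m - 1 - k)%N ltac:(lia).
by rewrite (_ : m - 1 - (m - 1 - k) = k)%N //; lia.
Qed.

(* [Mset] only constrains nonempty suffixes, so [ts] is one of them only when
   [0 < n]. *)
Lemma Mset_behead2 n eps x r s ts : (0 < n)%N ->
  Mset alpha beta n.+2 eps x [:: r, s & ts] -> Mset alpha beta n eps x ts.
Proof.
move=> n0 M; have [[/= [sz] [pos G]] _] := M.
have r0 : 0 < r by exact: (pos 0%N).
have s0 : 0 < s by exact: (pos 1%N).
split; first split => //; first split.
- by move=> k kn; exact: (pos k.+2).
- move: G; rewrite !Psi0_seq_cons.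
  by move=> /(Gamma_int_Psi (ltW r0)) /(Gamma_int_Psi (ltW s0)).
- by move=> j jn; apply: (Mset_gap (k := (n - 1 - j).+2) M); lia.
Qed.

Definition exit_time (eps : R) : R := 8 * (eps / (alpha * beta)) / (alpha - beta).

Definition corner_weight (l eps : R) : R := (alpha * exit_time eps) `^ (l / (2 * alpha)).

Definition contraction_factor (l eps : R) : R :=
  (2 * corner_weight l eps / l + exit_time eps) / l + 2 / l * exit_time eps.

Lemma exit_time_gt0 {eps} : 0 < eps -> 0 < exit_time eps.
Proof. by move=> eps0; rewrite !(divr_gt0, mulr_gt0) // subr_gt0. Qed.

Lemma contraction_factor_gt0 l eps : 0 < l -> 0 < eps -> 0 < contraction_factor l eps.
Proof.
move=> l0 eps0; have e0 := exit_time_gt0 eps0.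
have w0 : 0 <= 2 * corner_weight l eps / l by rewrite divr_ge0 ?mulr_ge0 ?powR_ge0 // ltW.
apply: addr_gt0; first exact: divr_gt0 (ltr_wpDl w0 e0) l0.
by apply: mulr_gt0 e0; rewrite divr_gt0.
Qed.

Lemma gap_lt_D y eps : `|D alpha beta y| < eps -> `|y.1 - y.2| < eps / (alpha * beta).
Proof.
have ab0 : 0 < alpha * beta by rewrite mulr_gt0.
by rewrite /D normrM (gtr0_norm ab0) ltr_pdivlMr // mulrC.
Qed.

Lemma expR_le_corner_weight l s eps : 0 <= l ->
  expR (- (alpha * s)) <= alpha * exit_time eps -> expR (- (l / 2 * s)) <= corner_weight l eps.
Proof.
move=> l0 es; have -> : - (l / 2 * s) = - (alpha * s) * (l / (2 * alpha)).
  by field; rewrite gt_eqF.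
rewrite expRM; apply: ge0_ler_powR => //; first by rewrite divr_ge0 // mulr_ge0 // ltW.
- by rewrite nnegrE expR_ge0.
- by rewrite nnegrE (le_trans (expR_ge0 _) es).
Qed.

Variables lam0 lam1 : R.
Hypothesis lam0_gt0 : 0 < lam0.
Hypothesis lam1_gt0 : 0 < lam1.

Let lam := Num.min lam0 lam1.
Let lam_gt0 : 0 < lam. Proof. by rewrite lt_min lam0_gt0. Qed.
Let lamvec_ge m k : lam <= lamvec lam0 lam1 m k.
Proof. by rewrite /lamvec; case: ifP => _; rewrite ge_min lexx ?orbT. Qed.

Let weight n eps x (ts : seq R) : \bar R :=
  ((\1_(Mset alpha beta n eps x) ts : R) * expR (- inner_lam lam0 lam1 n ts))%:E.

Let weight_ge0 n eps x ts : (0 <= weight n eps x ts)%E.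
Proof. by rewrite lee_fin mulr_ge0 ?expR_ge0. Qed.

Lemma weight_cons2_le n eps x r s ts : (0 < n)%N ->
  (weight n.+2 eps x [:: r, s & ts] <=
   (pair_majorant lam (corner_weight lam eps) (exit_time eps) r s)%:E * weight n eps x ts)%E.
Proof.
move=> n0; rewrite {1}/weight /indic.
have [/set_mem M|_] := boolP (_ \in _); last first.
  by rewrite mul0r mule_ge0 ?weight_ge0 // lee_fin pair_majorant_ge0 // powR_ge0.
have [[_ [pos _]] _] := M; have r0 : 0 < r by exact: (pos 0%N).
have s0 : 0 < s by exact: (pos 1%N).
rewrite /weight /indic mem_set /=; last exact: Mset_behead2 n0 M.
rewrite !mul1r -EFinM lee_fin.
rewrite inner_lam_cons2 opprD expRD ler_wpM2r ?expR_ge0 //.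
apply: expR_le_pair_majorant; rewrite ?powR_ge0 //.
have := Mset_gap (k := 2) M n0; have := Mset_gap (k := 1) M isT.
have := Mset_gap (k := 0) M isT.
rewrite /= drop0 !Psi0_seq_cons /= => /gap_lt_D gw /gap_lt_D gz /gap_lt_D gy.
have [far|[rr|ss]] := strip_trichotomy r0 s0 gy gz gw; [left|right; left|right; right] => //.
exact: expR_le_corner_weight (ltW lam_gt0) far.
Qed.

Lemma calM_cons2_le n eps x : 0 < eps -> (0 < n)%N ->
  (calM alpha beta n.+2 eps lam0 lam1 x <=
   (contraction_factor lam eps)%:E * calM alpha beta n eps lam0 lam1 x)%E.
Proof.
move=> eps0 n0.
apply: (@iint_cons2_le _ n (pair_majorant lam (corner_weight lam eps) (exit_time eps))).
- exact: contraction_factor_gt0.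
- by move=> r s; rewrite pair_majorant_ge0 // powR_ge0.
- exact: weight_ge0.
- exact: weight_ge0.
- by move=> r s ts; exact: weight_cons2_le.
- exact: integral_pair_majorant_le (powR_ge0 _ _) (exit_time_gt0 eps0).
Qed.

Lemma exit_time_cvg0 : exit_time eps @[eps --> 0^'+] --> 0.
Proof.
set k := 8 / (alpha * beta) / (alpha - beta).
have k_lim : (k * eps) @[eps --> 0^'+] --> k * 0.
  by apply: cvg_at_right_filter; apply: cvgM (cvg_cst _) _; exact: cvg_id.
rewrite mulr0 in k_lim; apply: cvg_trans k_lim; apply: near_eq_cvg.
by apply: nearW => eps; rewrite /exit_time /k; ring.
Qed.

Lemma corner_weight_cvg0 l : 0 < l -> corner_weight l eps @[eps --> 0^'+] --> 0.
Proof.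
move=> l0; set p := l / (2 * alpha).
set k := alpha * (8 / (alpha * beta) / (alpha - beta)).
have c0 : 0 < alpha - beta by rewrite subr_gt0.
have k0 : 0 <= k by rewrite ltW // mulr_gt0 // !divr_gt0 // mulr_gt0.
have k_lim : (k `^ p * eps `^ p) @[eps --> 0^'+] --> k `^ p * 0.
  by apply: cvgM (cvg_cst _) _; apply: powR_cvg0; rewrite divr_gt0 ?mulr_gt0.
rewrite mulr0 in k_lim; apply: cvg_trans k_lim; apply: near_eq_cvg; near=> eps.
rewrite /corner_weight -powRM //.
by congr powR; rewrite /exit_time /k; ring.
Unshelve. all: by end_near.
Qed.

Lemma contraction_factor_cvg0 l : 0 < l -> contraction_factor l eps @[eps --> 0^'+] --> 0.
Proof.
move=> l0; have w := corner_weight_cvg0 l0; have e := exit_time_cvg0.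
have : contraction_factor l eps @[eps --> 0^'+] --> (2 * 0 / l + 0) / l + 2 / l * 0.
  apply: cvgD; last exact: cvgM (cvg_cst _) e.
  by apply: cvgM (cvg_cst _); apply: cvgD e; apply: cvgM (cvg_cst _); apply: cvgM (cvg_cst _) w.
by rewrite !(mulr0, mul0r, addr0).
Qed.

End diagonal_strip.

Theorem lemma7p8 (R : realType) (alpha beta : R) (hb : 0 < beta)
  (hab : beta < alpha) (lam0 lam1 : R) (hl0 : 0 < lam0) (hl1 : 0 < lam1) :
  exists f : R -> R,
    (forall eps, 0 < eps -> 0 <= f eps) /\
    (f eps @[eps --> 0^'+] --> 0) /\
    (forall (eps : R) (n : nat) (x : R * R), 0 < eps -> (0 < n)%N ->
       Gamma_int alpha beta x ->
       (calM alpha beta n.+2 eps lam0 lam1 x <=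
          (f eps)%:E * calM alpha beta n eps lam0 lam1 x)%E).
Proof.
have lam_gt0 : 0 < Num.min lam0 lam1 by rewrite lt_min hl0.
exists (contraction_factor alpha beta (Num.min lam0 lam1)); split; [|split].
- by move=> eps eps0; rewrite ltW // contraction_factor_gt0.
- exact: contraction_factor_cvg0.
-
  by move=> eps n x eps0 n0 _; exact: calM_cons2_le.
Qed.
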